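(* Let $d\ge 1$, let $\Delta$ be a simplicial complex containing a $d$-dimensional cycle $\Omega$ whose $d$-faces are $F_1,\ldots,F_k$. Suppose there exist distinct $(d+1)$-faces $A_1,\ldots,A_\ell$ of the induced subcomplex $\Delta_{V(\Omega)}$ such that, over $\mathbb{Z}_2$, $$\partial_{d+1}\Big(\sum_{i=1}^\ell A_i\Big)=\sum_{j=1}^k F_j, \qquad ( * )$$ and no proper subset of $\{A_1,\ldots,A_\ell\}$ satisfies $( * )$. Then for any vertex $v\notin V(\Omega)$, the simplicial complex $\Phi=\langle F_1\cup\{v\},\ldots,F_k\cup\{v\},A_1,\ldots,A_\ell\rangle$ is a $(d+1)$-dimensional cycle.
   Context: A simplicial complex is a family of subsets (faces) of a finite vertex set closed under taking subsets; the dimension of a face $S$ is $|S|-1$, a $d$-face is a face of dimension $d$, facets are maximal faces, and $\langle G_1,\ldots,G_m\rangle$ denotes the simplicial complex whose facets are $G_1,\ldots,G_m$. $V(\Omega)$ is the vertex set of $\Omega$; for $W\subseteq V(\Delta)$, the induced subcomplex $\Delta_W$ consists of the faces of $\Delta$ contained in $W$. Over $\mathbb{Z}_2$, $C_d$ is the vector space with basis the $d$-faces and $\partial_d(F)$ is the sum of the $(d-1)$-faces contained in $F$. A complex is pure if all facets have the same dimension. A sequence $G_1,\ldots,G_m$ of $d$-faces is a $d$-path if $|G_i\cap G_{i+1}|=d$ for $1\le i\le m-1$. A pure $d$-dimensional complex is $d$-path-connected if every pair of its $d$-faces is joined by a $d$-path; its $d$-path-connected components are its maximal $d$-path-connected subcomplexes.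 A $d$-dimensional cycle is a pure $d$-dimensional simplicial complex $\Omega$ that is $d$-path-connected and in which every $(d-1)$-face of $\Omega$ is contained in an even number of $d$-faces of $\Omega$. *)

(* Vertices range over a finite type T; a family of faces is
   a {set {set T}}; Z_2-chains are represented by sets of faces (sum = symmetric
   difference), so a Z_2 d-chain is a set of d-faces. *)
From mathcomp Require Import all_boot all_order.
Set Implicit Arguments. Unset Strict Implicit. Unset Printing Implicit Defensive.

Section SC.
Variable T : finType.

Definition is_complex (D : {set {set T}}) : Prop :=
  forall F S : {set T}, F \in D -> S \subset F -> S \in D.

Definition vertices (D : {set {set T}}) : {set T} := \bigcup_(F in D) F.

Definition induced (D : {set {set T}}) (W : {set T}) : {set {set T}} :=
  [set F in D | F \subset W].

Definition dfaces (D : {set {set T}}) (d : nat) : {set {set T}} :=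
  [set F in D | #|F| == d.+1].

Definition is_facet (D : {set {set T}}) (F : {set T}) : Prop :=
  F \in D /\ forall G, G \in D -> F \subset G -> G = F.

Definition pure_dim (D : {set {set T}}) (d : nat) : Prop :=
  (exists F, F \in D) /\ forall F, is_facet D F -> #|F| = d.+1.

Definition dadj (d : nat) : rel {set T} := fun G H => #|G :&: H| == d.

Definition is_dpath (D : {set {set T}}) (d : nat) (G : {set T}) (s : seq {set T}) :=
  all (fun F => F \in dfaces D d) (G :: s) && path (dadj d) G s.

Definition dpath_connected (D : {set {set T}}) (d : nat) : Prop :=
  forall G H, G \in dfaces D d -> H \in dfaces D d ->
    exists s, is_dpath D d G s /\ last G s = H.

Definition is_cycle (D : {set {set T}}) (d : nat) : Prop :=
  [/\ is_complex D, pure_dim D d, dpath_connected D d &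
      forall S, S \in D -> #|S| = d ->
        ~~ odd #|[set F in dfaces D d | S \subset F]| ].

Definition bdry (d : nat) (As : {set {set T}}) : {set {set T}} :=
  [set G : {set T} | (#|G| == d.+1) && odd #|[set A in As | G \subset A]|].

Definition generated (Gs : {set {set T}}) : {set {set T}} :=
  [set S : {set T} | [exists G in Gs, S \subset G]].

End SC.

From mathcomp Require Import all_boot all_order.
Set Implicit Arguments. Unset Strict Implicit. Unset Printing Implicit Defensive.

(* Phi is generated by its (d+1)-faces: the cones v |: F over the d-faces of
   Omega, and the A_i.  A d-face S of Phi through v lies only in cones, and
   these correspond to the d-faces of Omega through S :\ v, an even number
   since Omega is a cycle.  A d-face S avoiding v lies in the cone v |: S iff
   S is a d-face of Omega, and in an odd number of A_i iff S lies in the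
   boundary of sum A_i, which is the same condition by ( * ).  The cones are
   (d+1)-path-connected because Omega is d-path-connected.  Finally, if some
   A_i could not be reached from the cones, the A_i that cannot be reached
   would have zero boundary: all A_i through a common d-face are mutually
   adjacent, and a d-face in an odd number of them is a face of Omega whose
   cone is adjacent to them.  Removing them would preserve ( * ),
   contradicting minimality. *)

Section Complexes.
Variable T : finType.
Implicit Types (D Gs : {set {set T}}) (A F G H S : {set T}) (n : nat).

Lemma generated_complex Gs : is_complex (generated Gs).
Proof.
move=> F S; rewrite !inE => /existsP [G /andP [GG FG]] SF.
by apply/existsP; exists G; rewrite GG (subset_trans SF FG).
Qed.

Lemma generatedP Gs S :
  reflect (exists2 G, G \in Gs & S \subset G) (S \in generated Gs).
Proof.
rewrite inE; apply: (iffP existsP) => [[G /andP [GG SG]]|[G GG SG]].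
  by exists G.
by exists G; rewrite GG.
Qed.

Lemma mem_generated Gs G : G \in Gs -> G \in generated Gs.
Proof. by move=> GG; apply/generatedP; exists G. Qed.

Lemma facet_exists D F : F \in D -> exists2 G, is_facet D G & F \subset G.
Proof.
move=> FD; pose P G := (G \in D) && (F \subset G).
have PF : P F by rewrite /P FD subxx.
case: (arg_maxnP (fun G => #|G|) PF) => G /andP [GD FG] maxG; exists G => //.
split=> // H HD GH; apply/eqP; rewrite eq_sym eqEcard GH /=.
by apply: maxG; rewrite /P HD (subset_trans FG GH).
Qed.

Lemma pure_dim_dface D n : pure_dim D n -> exists F, F \in dfaces D n.
Proof.
case=> [[F FD] cardFacet]; have [G facetG _] := facet_exists FD.
by exists G; rewrite inE (cardFacet _ facetG) eqxx andbT; case: facetG.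
Qed.

Lemma odd_dfaces_sup D n S : #|S| = n.+1 ->
  odd #|[set F in dfaces D n | S \subset F]| = (S \in dfaces D n).
Proof.
move=> cS; have supE F : F \in dfaces D n -> (S \subset F) = (F == S).
  by rewrite inE => /andP [_ /eqP cF]; rewrite eq_sym eqEcard cS cF leqnn andbT.
case: (boolP (S \in dfaces D n)) => SD.
  suff -> : [set F in dfaces D n | S \subset F] = [set S] by rewrite cards1.
  apply/setP=> F; rewrite in_set1; apply/setIdP/eqP => [[FD]|->].
    by rewrite supE // => /eqP.
  by rewrite SD subxx.
suff -> : [set F in dfaces D n | S \subset F] = set0 by rewrite cards0.
apply/setP=> F; rewrite in_set0; apply/setIdP => -[FD]; rewrite supE // => /eqP FS.
by rewrite -FS FD in SD.
Qed.

Lemma dadj_common_subface n A A' G :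
    #|A| = n.+1 -> #|A'| = n.+1 -> A != A' ->
  G \subset A -> G \subset A' -> #|G| = n -> dadj n A A'.
Proof.
move=> cA cA' neqA GA GA' cG.
have lower : n <= #|A :&: A'| by rewrite -cG subset_leq_card // subsetI GA GA'.
have upper : #|A :&: A'| < #|A|.
  apply: proper_card; rewrite properEneq subsetIl andbT.
  apply: contra neqA => /eqP/setIidPl AA'.
  by rewrite eqEcard AA' cA cA' /=.
by rewrite /dadj eqn_leq lower andbT -ltnS -cA.
Qed.

Lemma mem_bdry n (As : {set {set T}}) G :
  (G \in bdry n As) = (#|G| == n.+1) && odd #|[set A in As | G \subset A]|.
Proof. by rewrite inE. Qed.

Lemma bdry_setD n (As B : {set {set T}}) :
  bdry n (As :&: B) = set0 -> bdry n (As :\: B) = bdry n As.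
Proof.
move=> bdB; apply/setP=> G; rewrite !mem_bdry; apply: andb_id2l => /eqP cG.
have : G \notin bdry n (As :&: B) by rewrite bdB inE.
rewrite mem_bdry cG eqxx /= => /negbTE evenB.
rewrite -(cardsID B [set A in As | G \subset A]) oddD.
have -> : [set A in As | G \subset A] :&: B = [set A in As :&: B | G \subset A].
  by apply/setP=> A; rewrite !inE andbAC.
have -> : [set A in As | G \subset A] :\: B = [set A in As :\: B | G \subset A].
  by apply/setP=> A; rewrite !inE andbA.
by rewrite evenB.
Qed.

Definition adj_in Gs n : rel {set T} :=
  fun G H => [&& G \in Gs, H \in Gs & dadj n G H].

Lemma adj_in_sym Gs n : symmetric (adj_in Gs n).
Proof. by move=> G H; rewrite /adj_in /dadj setIC andbCA. Qed.

Section Generated.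
Variables (Gs : {set {set T}}) (n : nat).
Hypothesis cardGs : forall G, G \in Gs -> #|G| = n.+1.

Lemma dfaces_generated : dfaces (generated Gs) n = Gs.
Proof.
apply/setP=> S; rewrite inE; apply/andP/idP => [[/generatedP [G GG SG] /eqP cS]|SG].
  by have /eqP -> : S == G by rewrite eqEcard SG cS cardGs ?leqnn.
by rewrite mem_generated // cardGs.
Qed.

Lemma pure_dim_generated G : G \in Gs -> pure_dim (generated Gs) n.
Proof.
move=> GG; split; first by exists G; apply: mem_generated.
move=> F [/generatedP [H HG FH] maxF].
by rewrite -(maxF H (mem_generated HG) FH) cardGs.
Qed.

Lemma dpath_connected_generated :
  {in Gs &, forall G H, connect (adj_in Gs n) G H} ->
  dpath_connected (generated Gs) n.
Proof.
move=> connGs G H; rewrite dfaces_generated => GG HG.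
have /connectP [p pathGp ->] := connGs G H GG HG; exists p; split=> //.
rewrite /is_dpath dfaces_generated /= GG.
elim: p G pathGp {GG HG} => [|K p IHp] G //= /andP [/and3P [_ KG GK] pathKp].
by rewrite KG GK /=; apply: IHp.
Qed.

End Generated.
End Complexes.

Section Cone.
Variables (T : finType) (d : nat) (Omega : {set {set T}}) (v : T).
Hypothesis vO : v \notin vertices Omega.
Implicit Types F G S : {set T}.

Local Notation cones := [set v |: F | F in dfaces Omega d].

Lemma notin_face F : F \in Omega -> v \notin F.
Proof. by move=> FO; apply: contra vO; apply/subsetP/bigcup_sup. Qed.

Lemma notin_dface F : F \in dfaces Omega d -> v \notin F.
Proof. by rewrite inE => /andP [/notin_face]. Qed.

Lemma card_cone F : F \in dfaces Omega d -> #|v |: F| = d.+2.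
Proof.
move=> FO; rewrite cardsU1 notin_dface //.
by move: FO; rewrite inE => /andP [_ /eqP ->].
Qed.

Lemma card_cones_sup S :
  #|[set C in cones | S \subset C]| = #|[set F in dfaces Omega d | S :\ v \subset F]|.
Proof.
have coneK : {in [set F in dfaces Omega d | S :\ v \subset F],
    cancel (fun F => v |: F) (fun C => C :\ v)}.
  by move=> F /setIdP [/notin_dface vF _]; apply: setU1K.
rewrite -(card_in_imset (can_in_inj coneK)).
apply: eq_card => C; rewrite inE; apply/andP/imsetP => [[/imsetP [F FO ->] SC]|].
  by exists F; rewrite // inE FO subDset.
by case=> F /setIdP [FO SF] ->; rewrite imset_f // -subDset.
Qed.

Lemma dadj_cone F G : F \in dfaces Omega d -> dadj d F G -> dadj d.+1 (v |: F) (v |: G).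
Proof.
by move=> FO; rewrite /dadj -setUIr cardsU1 inE negb_and notin_dface.
Qed.

Lemma connect_cones (Gs : {set {set T}}) :
  cones \subset Gs -> dpath_connected Omega d ->
  {in dfaces Omega d &, forall F G, connect (adj_in Gs d.+1) (v |: F) (v |: G)}.
Proof.
move=> conesGs connO F G FO GO.
have [p [/andP [/= /andP [_ Fp] pathFp] <-]] := connO F G FO GO.
elim: p F FO Fp pathFp {GO} => [|H p IHp] F FO //= /andP [HO Hp] /andP [FH pathHp].
apply: connect_trans (IHp H HO Hp pathHp); apply: connect1.
by rewrite /adj_in !(subsetP conesGs) ?imset_f ?dadj_cone.
Qed.

End Cone.

Section CappedCone.
Variables (T : finType) (d : nat) (Omega As : {set {set T}}) (v : T).
Implicit Types (A G S : {set T}) (Bs : {set {set T}}).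
Hypotheses (cycleO : is_cycle Omega d) (vO : v \notin vertices Omega).
Hypotheses (cardAs : forall A, A \in As -> #|A| = d.+2)
  (vAs : forall A, A \in As -> v \notin A).
Hypotheses (bdryAs : bdry d As = dfaces Omega d)
  (minAs : forall Bs, Bs \proper As -> bdry d Bs != dfaces Omega d).

Local Notation cones := [set v |: F | F in dfaces Omega d].
Local Notation Gs := (cones :|: As).
Local Notation Phi := (generated Gs).
Local Notation adj := (adj_in Gs d.+1).

Lemma card_facets G : G \in Gs -> #|G| = d.+2.
Proof. by case/setUP => [/imsetP [F FO ->]|/cardAs //]; apply: (card_cone vO). Qed.

Lemma card_facets_sup S : #|[set G in Gs | S \subset G]| =
  #|[set C in cones | S \subset C]| + #|[set A in As | S \subset A]|.
Proof.
rewrite -(cardsID cones); congr (_ + _); apply: eq_card => G; rewrite !inE.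
  by case: (G \in cones) => /=; rewrite ?andbT ?andbF.
case: (boolP (G \in cones)) => //= /imsetP [F _ ->].
by case: (boolP (v |: F \in As)) => // /vAs; rewrite setU11.
Qed.

Lemma ridge_degree_even S : S \in Phi -> #|S| = d.+1 ->
  ~~ odd #|[set G in dfaces Phi d.+1 | S \subset G]|.
Proof.
move=> SPhi cS; have [complexO _ _ evenO] := cycleO.
rewrite dfaces_generated; last exact: card_facets.
rewrite card_facets_sup card_cones_sup //.
case: (boolP (v \in S)) => vS.
  have -> : [set A in As | S \subset A] = set0.
    apply/setP=> A; rewrite !inE; apply/andP => -[/vAs vA /subsetP SA].
    by rewrite SA in vA.
  have [G /setUP [/imsetP [F FO ->]|/vAs vG] SG] := generatedP _ _ SPhi; last first.
    by rewrite (subsetP SG) in vG.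
  rewrite cards0 addn0; apply: evenO.
    by apply: (complexO F); [case/setIdP: FO | rewrite subDset].
  by move: cS; rewrite (cardsD1 v) vS => -[].
have -> : S :\ v = S.
  by apply/setP=> x; rewrite !inE; case: eqVneq => // ->; rewrite (negbTE vS).
rewrite oddD odd_dfaces_sup // -bdryAs inE cS eqxx.
by case: (odd _).
Qed.

Lemma connect_common_subface G A A' : A \in Gs -> A' \in Gs ->
  G \subset A -> G \subset A' -> #|G| = d.+1 -> connect adj A A'.
Proof.
move=> AG A'G GA GA' cG; case: (eqVneq A A') => [<-|neqA]; first exact: connect0.
apply: connect1; rewrite /adj_in AG A'G /=.
by apply: (dadj_common_subface _ _ neqA GA GA' cG); apply: card_facets.
Qed.

Let reached A := [exists C in cones, connect adj A C].
Let stranded := [set A | ~~ reached A].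

Lemma bdry_stranded : bdry d (As :&: stranded) = set0.
Proof.
apply/setP=> G; rewrite inE in_set0; apply/negP => /andP [/eqP cG oddG].
have [A0] : exists A0, A0 \in [set A in As :&: stranded | G \subset A].
  by apply/set0Pn; apply: contraTneq oddG => ->; rewrite cards0.
rewrite !inE => /andP [/andP [A0As unreachedA0] GA0].
have A0Gs : A0 \in Gs by rewrite inE A0As orbT.
have strandedE : [set A in As :&: stranded | G \subset A] = [set A in As | G \subset A].
  apply/setP=> A; rewrite !inE; case: (boolP (A \in As)) => //= AAs.
  case: (boolP (G \subset A)) => GA; rewrite ?andbF ?andbT //.
  apply: contra unreachedA0 => /existsP [C /andP [Ccone AC]]; apply/existsP; exists C.
  rewrite Ccone (connect_trans _ AC) //.
  by apply: (connect_common_subface (G := G)) => //; rewrite inE AAs orbT.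
have GO : G \in dfaces Omega d by rewrite -bdryAs inE cG eqxx -strandedE.
move/negP: unreachedA0; apply; apply/existsP; exists (v |: G); rewrite imset_f //=.
apply: (connect_common_subface (G := G)) => //; last exact: subsetUr.
by rewrite inE imset_f.
Qed.

Lemma reached_As A : A \in As -> reached A.
Proof.
move=> AAs; apply: contraT => unreachedA.
have strandedA : A \in stranded by rewrite inE.
have properAs : As :\: stranded \proper As.
  rewrite properEneq subsetDl andbT; apply: contraTneq AAs => <-.
  by rewrite in_setD strandedA.
by have := minAs properAs; rewrite bdry_setD ?bdry_stranded // bdryAs eqxx.
Qed.

Lemma capped_cone_cycle : is_cycle Phi d.+1.
Proof.
have [_ pureO connO _] := cycleO; have [F0 F0O] := pure_dim_dface pureO.
have conesGs : cones \subset Gs by apply: subsetUl.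
have connect_F0 G : G \in Gs -> connect adj G (v |: F0).
  case/setUP => [/imsetP [F FO ->]|].
    exact: (connect_cones vO conesGs connO FO F0O).
  case/reached_As/existsP => _ /andP [/imsetP [F FO ->] GF].
  exact: connect_trans GF (connect_cones vO conesGs connO FO F0O).
split.
- exact: generated_complex.
- by apply: (pure_dim_generated card_facets (G := v |: F0)); rewrite inE imset_f.
- apply: dpath_connected_generated card_facets _ => G H GG HG.
  rewrite (connect_trans (connect_F0 G GG)) // (sym_connect_sym (adj_in_sym _ _)).
  exact: connect_F0.
- exact: ridge_degree_even.
Qed.

End CappedCone.

Theorem mainTheorem4 (T : finType) (d : nat) (Delta Omega As : {set {set T}})
    (v : T) :
  1 <= d ->
  is_complex Delta ->
  is_cycle Omega d ->
  Omega \subset Delta ->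
  As \subset dfaces (induced Delta (vertices Omega)) d.+1 ->
  bdry d As = dfaces Omega d ->
  (forall Bs : {set {set T}}, Bs \proper As -> bdry d Bs != dfaces Omega d) ->
  v \in vertices Delta ->
  v \notin vertices Omega ->
  is_cycle (generated ([set v |: F | F in dfaces Omega d] :|: As)) d.+1.
Proof.
(* Neither d >= 1 nor the ambient complex Delta plays any role. *)
move=> _ _ cycleO _ AsD bdryAs minAs _ vO.
have AsP A : A \in As -> #|A| = d.+2 /\ A \subset vertices Omega.
  by move/(subsetP AsD); rewrite !inE => /andP [/andP [_ AO] /eqP].
apply: capped_cone_cycle => // [A /AsP [] //|A /AsP [_ AO]].
by apply: contra vO; apply: (subsetP AO).
Qed.
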